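(* Let $a_1,a_2$ be nonzero integers, $\alpha,\beta$ the roots of $X^2-a_1X-a_2$, $\gamma:=\alpha/\beta$ assumed not a root of unity, $\Delta:=a_1^2+4a_2$ assumed not a square, $\Delta_0$ its squarefree part, $K:=\mathbb{Q}(\sqrt\Delta)$, and $h$ the greatest positive integer such that $\gamma$ is an $h$th power in $K$. Let $d$ be an odd positive integer with $3\nmid d$ whenever $\Delta_0=-3$. Then \[ \sum_{v\mid d^\infty}\sum_{a\mid d}\mu(a)\,\delta_{U,dv,av}=\delta_U(d), \] where \[ \delta_U(d):=\frac1d\left(\frac{1}{(d^\infty,h)}+\eta_U(d)\right)\prod_{p\mid d}\left(1-\frac1{p^2}\right)^{-1}, \] with $\eta_U(d):=0$ if $\Delta>0$ or $\Delta_0\not\equiv1\pmod4$ or $\Delta_0\nmid d^\infty$, and $\eta_U(d):=\frac{(d^\infty,h)}{[(d^\infty,h),\,\Delta_0/(d,\Delta_0)]^2}$ otherwise.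
   Context: For positive integers $m\mid n$: $\delta_{U,n,m}:=\frac{(m,h)}{\varphi(n)m}$ if $\Delta>0$ or $\Delta_0\not\equiv1\pmod4$ or $\Delta_0\nmid n$, and $\delta_{U,n,m}:=\frac{2(m,h)}{\varphi(n)m}$ otherwise. $d^\infty=\prod_{p\mid d}p^\infty$: the sum over $v\mid d^\infty$ runs over positive integers all of whose prime factors divide $d$; $(d^\infty,h)$ is the largest divisor of $h$ composed of primes dividing $d$; $\Delta_0\mid d^\infty$ means every prime factor of $\Delta_0$ divides $d$; $[\cdot,\cdot]$ denotes lcm; $\mu$ is the Möbius function. *)

From HB Require Import structures.
From mathcomp Require Import all_boot all_order all_algebra all_field.
From mathcomp Require Import all_classical all_reals all_analysis.
Set Implicit Arguments. Unset Strict Implicit. Unset Printing Implicit Defensive.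
Import Order.TTheory GRing.Theory Num.Theory.
Local Open Scope ring_scope.

Definition moebius (n : nat) : int :=
  if n == 0%N then 0
  else if all (fun p => logn p n == 1%N) (primes n) then (-1) ^+ size (primes n)
  else 0.

Definition sqfree_part (z : int) : int :=
  sgz z * (\prod_(p <- primes `|z|%N) (p ^ (logn p `|z|%N %% 2))%N)%:Z.

Definition quadK (D : int) : pred algC :=
  fun z => `[< exists x y : rat, z = ratr x + ratr y * sqrtC (D%:~R) >].

Definition is_pow_in (D : int) (n : nat) (z : algC) : Prop :=
  exists k : algC, k \in quadK D /\ k ^+ n = z.

Definition is_max_pow (D : int) (g : algC) (h : nat) : Prop :=
  (0 < h)%N /\ is_pow_in D h g /\ forall m : nat, (0 < m)%N -> is_pow_in D m g -> (m <= h)%N.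

Definition excep (D D0 : int) (cond : bool) : bool :=
  ~~ ((0 < D) || ((D0 %% 4)%Z != 1) || ~~ cond).

Definition deltaU_nm (R : realType) (D D0 : int) (h n m : nat) : R :=
  (if excep D D0 (D0 %| n%:Z)%Z then 2 else 1) * (gcdn m h)%:R / ((totient n)%:R * m%:R).

(* (d^infty, h) : largest divisor of h composed of primes dividing d *)
Definition dinf_gcd (d h : nat) : nat := h`_(\pi(d)).

Definition etaU (R : realType) (D D0 : int) (h d : nat) : R :=
  if excep D D0 (\pi(d).-nat `|D0|%N)
  then (dinf_gcd d h)%:R
       / ((lcmn (dinf_gcd d h) (`|D0|%N %/ gcdn d `|D0|%N))%:R ^+ 2)
  else 0.

Definition deltaU (R : realType) (D D0 : int) (h d : nat) : R :=
  d%:R^-1 * ((dinf_gcd d h)%:R^-1 + etaU R D D0 h d)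
  * \prod_(p <- primes d) (1 - (p%:R ^+ 2)^-1)^-1.

(* summand indexed by v (zero unless v | d^infty) *)
Definition lhs_term (R : realType) (D D0 : int) (h d v : nat) : R :=
  if \pi(d).-nat v
  then \sum_(a <- divisors d) (moebius a)%:~R * deltaU_nm R D D0 h (d * v) (a * v)
  else 0.

From HB Require Import structures.
From mathcomp Require Import all_boot all_order all_algebra all_field.
From mathcomp Require Import all_classical all_reals all_analysis.
From mathcomp Require Import zify ring.
Import Order.TTheory GRing.Theory Num.Theory numFieldNormedType.Exports.
Local Open Scope ring_scope.
Local Open Scope classical_set_scope.

(* For d-smooth v (all prime factors of v divide d) the inner Moebius sum
   factors over the primes q | d, and the q-factor vanishes as soon as
   v_q(v) < v_q(h).  Hence the v-th term is 0 unless g := (d^oo, h) divides v,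
   and then it is c g / (d v^2), where c in {1, 2} is the factor of
   delta_{U,n,m}: it does not depend on v, because the squarefree Delta0
   divides dv iff all its primes divide d.  Writing v = g u with u d-smooth,
   the Euler product sum_u u^-2 = prod_{p | d} (1 - p^-2)^-1 gives
   c / (d g) prod_{p | d} (1 - p^-2)^-1, which is delta_U(d): in the
   exceptional case Delta0 | d, so eta_U(d) = 1 / g. *)

Set Implicit Arguments.
Unset Strict Implicit.

Lemma pnat_gt0 pi n : pi.-nat n -> (0 < n)%N.
Proof. by case/andP. Qed.

Lemma primes_pfactorM q k b : prime q -> (0 < k)%N -> (0 < b)%N -> ~~ (q %| b)%N ->
  perm_eq (primes (q ^ k * b)) (q :: primes b).
Proof.
move=> q_pr k_gt0 b_gt0 qNb; apply: uniq_perm; rewrite ?primes_uniq //=.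
  by rewrite primes_uniq mem_primes (negPf qNb) !andbF.
have qk_gt0 : (0 < q ^ k)%N by rewrite expn_gt0 prime_gt0.
by move=> p; rewrite primesM // primesX // primes_prime // !inE.
Qed.

Lemma moebius_sqr_dvd q a : prime q -> (0 < a)%N -> (q ^ 2 %| a)%N -> moebius a = 0.
Proof.
move=> q_pr a_gt0 qqa; rewrite /moebius eqn0Ngt a_gt0 /=.
have q_a : q \in primes a.
  by rewrite mem_primes q_pr a_gt0 (dvdn_trans _ qqa) // dvdn_exp.
by case: allP => // /(_ q q_a) /eqP lqa; move: qqa; rewrite pfactor_dvdn // lqa.
Qed.

Lemma moebius_mul_prime q b : prime q -> (0 < b)%N -> ~~ (q %| b)%N ->
  moebius (q * b) = - moebius b.
Proof.
move=> q_pr b_gt0 qNb; have q_gt0 := prime_gt0 q_pr.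
have primes_qb : perm_eq (primes (q * b)) (q :: primes b).
  by rewrite -{1}(expn1 q) primes_pfactorM.
have logn_qb p : p \in primes b -> logn p (q * b) = logn p b.
  move=> p_b; rewrite lognM // logn_prime //; case: eqP => [Epq|] //.
  by move: p_b; rewrite Epq mem_primes (negPf qNb) !andbF.
have logn_q : logn q (q * b) = 1%N.
  by rewrite lognM // logn_prime // eqxx logn_coprime // prime_coprime.
rewrite /moebius !eqn0Ngt muln_gt0 q_gt0 b_gt0 /=.
rewrite (perm_all _ primes_qb) (perm_size primes_qb) /= logn_q eqxx /=.
rewrite (@eq_in_all _ _ (fun p => logn p b == 1%N)); last by move=> p /logn_qb ->.
by case: ifP; rewrite ?oppr0 // exprS mulN1r.
Qed.

Lemma sum_moebius_divisors_pfactor (R : ringType) (F : nat -> R) q k d :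
  prime q -> (0 < k)%N -> (0 < d)%N -> ~~ (q %| d)%N ->
  \sum_(a <- divisors (q ^ k * d)) (moebius a)%:~R * F a =
  \sum_(b <- divisors d) (moebius b)%:~R * (F b - F (q * b)%N).
Proof.
move=> q_pr k_gt0 d_gt0 qNd; have q_gt0 := prime_gt0 q_pr.
have n_gt0 : (0 < q ^ k * d)%N by rewrite muln_gt0 expn_gt0 q_gt0.
have Eqk : (q ^ k * d = q * (q ^ k.-1 * d))%N by rewrite mulnA -expnS prednK.
have dvd_coprime b j : ~~ (q %| b)%N -> (b %| q ^ j * d)%N = (b %| d)%N.
  by move=> qNb; rewrite Gauss_dvdr // coprime_sym coprimeXl // prime_coprime.
have qNdiv b : (b %| d)%N -> ~~ (q %| b)%N.
  by move=> b_d; apply: contra qNd => /dvdn_trans; apply.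
set G := fun a => (moebius a)%:~R * F a.
have sum_coprime : \sum_(a <- divisors (q ^ k * d) | ~~ (q %| a)%N) G a =
                   \sum_(b <- divisors d) G b.
  rewrite -big_filter; apply: perm_big.
  apply: uniq_perm; rewrite ?filter_uniq ?divisors_uniq // => a.
  rewrite mem_filter -!dvdn_divisors //.
  apply/andP/idP => [[qNa] | a_d]; first by rewrite dvd_coprime.
  by rewrite qNdiv // dvdn_mull.
have sum_q : \sum_(a <- divisors (q ^ k * d) | (q %| a)%N) G a =
             \sum_(b <- divisors d) G (q * b)%N.
  rewrite (bigID (fun a => (q ^ 2 %| a)%N)) /= big1_seq ?add0r; last first.
    move=> a /andP[/andP[_ qqa]]; rewrite -dvdn_divisors // => a_n.
    by rewrite /G (moebius_sqr_dvd q_pr (dvdn_gt0 n_gt0 a_n) qqa) mul0r.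
  rewrite -big_filter -[RHS](big_map (muln q) xpredT G); apply: perm_big.
  apply: uniq_perm; rewrite ?filter_uniq ?divisors_uniq //.
    by rewrite map_inj_uniq ?divisors_uniq // => x y /eqP; rewrite eqn_pmul2l // => /eqP.
  move=> a; rewrite mem_filter -dvdn_divisors //.
  apply/andP/mapP => [[/andP[/dvdnP[b ->] qqNbq]] | [b]].
    rewrite [(b * q)%N]mulnC Eqk dvdn_pmul2l // => b_n.
    have qNb : ~~ (q %| b)%N by apply: contra qqNbq; rewrite mulnC expnS dvdn_pmul2l.
    by exists b; rewrite // -dvdn_divisors // -(dvd_coprime _ k.-1).
  rewrite -dvdn_divisors // => b_d ->.
  rewrite dvdn_mulr //= expnS dvdn_pmul2l // qNdiv //=.
  by rewrite Eqk dvdn_pmul2l // dvdn_mull.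
rewrite (bigID (fun a => (q %| a)%N)) /= sum_coprime sum_q addrC -big_split /=.
apply: eq_big_seq => b; rewrite -dvdn_divisors // => b_d.
rewrite /G moebius_mul_prime ?(dvdn_gt0 d_gt0 b_d) ?qNdiv //.
by rewrite mulrBr intrN mulNr.
Qed.

Lemma gcdn_mul_prime q x h : prime q -> (0 < x)%N -> (0 < h)%N ->
  gcdn (q * x) h = if (logn q x < logn q h)%N then (q * gcdn x h)%N else gcdn x h.
Proof.
move=> q_pr x_gt0 h_gt0; have q_gt0 := prime_gt0 q_pr.
have qx_gt0 : (0 < q * x)%N by rewrite muln_gt0 q_gt0.
have g_gt0 : (0 < gcdn x h)%N by rewrite gcdn_gt0 x_gt0.
apply: eqn_from_log; first by rewrite gcdn_gt0 qx_gt0.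
  by case: ifP; rewrite ?muln_gt0 ?q_gt0.
move=> p; rewrite logn_gcd // lognM // logn_prime //.
case: ifP => cmp; rewrite ?(lognM _ q_gt0 g_gt0) ?(logn_prime _ q_pr) logn_gcd //.
  by case: eqP => [->|_] /=; lia.
by case: eqP => [->|_] /=; lia.
Qed.

Lemma sum_moebius_gcdn (R : numFieldType) d v h : (0 < d)%N -> (0 < v)%N -> (0 < h)%N ->
  \sum_(a <- divisors d) (moebius a)%:~R * ((gcdn (a * v) h)%:R / a%:R) =
  (gcdn v h)%:R * \prod_(q <- primes d)
      (if (logn q v < logn q h)%N then 0 else 1 - q%:R^-1) :> R.
Proof.
move=> + v_gt0 h_gt0; elim/ltn_ind: d => d IH d_gt0.
have [d_le1 | d_gt1] := leqP d 1.
  have -> : d = 1%N by lia.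
  by rewrite big_nil mulr1 big_seq1 mul1n divr1 mul1r.
set q := pdiv d; have q_pr : prime q by exact: pdiv_prime.
have q_gt0 := prime_gt0 q_pr.
have k_gt0 : (0 < logn q d)%N by rewrite logn_gt0 mem_primes q_pr d_gt0 pdiv_dvd.
have [m qNm Ed] := pfactor_coprime q_pr d_gt0; rewrite prime_coprime // in qNm.
set k := logn q d in k_gt0 Ed; rewrite mulnC in Ed.
have m_gt0 : (0 < m)%N by move: d_gt0; rewrite Ed muln_gt0 => /andP[].
have m_lt_d : (m < d)%N.
  by rewrite Ed ltn_Pmull // -(expn0 q) ltn_exp2l // prime_gt1.
rewrite Ed (sum_moebius_divisors_pfactor _ q_pr k_gt0 m_gt0 qNm).
rewrite (perm_big _ (primes_pfactorM q_pr k_gt0 m_gt0 qNm)) big_cons /=.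
rewrite mulrCA -(IH m m_lt_d m_gt0) big_distrr /=.
apply: eq_big_seq => b; rewrite -dvdn_divisors // => b_m.
have b_gt0 : (0 < b)%N by apply: dvdn_gt0 b_m.
have qNb : ~~ (q %| b)%N by apply: contra qNm => /dvdn_trans; apply.
have bv_gt0 : (0 < b * v)%N by rewrite muln_gt0 b_gt0.
have logn_bv : logn q (b * v) = logn q v.
  by rewrite lognM // logn_coprime // prime_coprime.
have bR : (b%:R : R) != 0 by rewrite pnatr_eq0 -lt0n.
have qR : (q%:R : R) != 0 by rewrite pnatr_eq0 -lt0n.
rewrite -mulnA (gcdn_mul_prime q_pr bv_gt0 h_gt0) logn_bv.
move: ((moebius b)%:~R : R) => M.
by case: ifP => _; rewrite !natrM; field; rewrite bR qR.
Qed.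

Lemma natr_totient (R : numFieldType) n : (0 < n)%N ->
  (totient n)%:R = n%:R * \prod_(p <- primes n) (1 - p%:R^-1) :> R.
Proof.
move=> n_gt0; have En : n = (\prod_(p <- primes n) p ^ logn p n)%N.
  by rewrite {1}(prod_prime_decomp n_gt0) prime_decompE big_map.
rewrite totientE // [in n%:R]En !natr_prod -big_split /=; apply: eq_big_seq => p.
rewrite mem_primes => /and3P[p_pr _ p_n].
have e_gt0 : (0 < logn p n)%N by rewrite logn_gt0 mem_primes p_pr n_gt0.
have pR : (p%:R : R) != 0 by rewrite pnatr_eq0 -lt0n prime_gt0.
rewrite natrM !natrX -(prednK e_gt0) exprS /= -subn1 natrB ?prime_gt0 //.
by field.
Qed.

Lemma primes_mul_pnat d v : (0 < d)%N -> \pi(d).-nat v -> primes (d * v) = primes d.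
Proof.
move=> d_gt0 v_pnat; have v_gt0 := pnat_gt0 v_pnat.
apply/eq_primes => p; rewrite primesM // orb_idr //.
exact: pnatPpi v_pnat.
Qed.

Lemma logn_partn pi q n : q \in pi -> logn q n`_pi = logn q n.
Proof.
by move=> q_pi; rewrite -logn_part partn_part ?logn_part // => p; rewrite inE => /eqP ->.
Qed.

Lemma partn_dvdn_logn (d h v : nat) : (0 < v)%N ->
  (h`_\pi(d) %| v)%N = all (fun q => logn q h <= logn q v)%N (primes d).
Proof.
move=> v_gt0; apply/idP/allP => [h_v q q_d | le_h_v].
  by rewrite -(@logn_partn \pi(d)) // dvdn_leq_log.
apply/dvdn_partP => // p p_h.
have p_d : p \in primes d by apply: pnatPpi (part_pnat \pi(d) h) p_h.
have p_pr : prime p by move: p_d; rewrite mem_primes => /andP[].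
by rewrite p_part pfactor_dvdn // logn_partn // le_h_v.
Qed.

Lemma gcdn_pnat_partn pi h v : (0 < h)%N -> pi.-nat v -> (h`_pi %| v)%N ->
  gcdn v h = (h`_pi)%N.
Proof.
move=> h_gt0 v_pnat h_v; have v_gt0 := pnat_gt0 v_pnat.
rewrite -(part_pnat_id (pnat_dvd (dvdn_gcdl v h) v_pnat)) partn_gcd //.
by rewrite (part_pnat_id v_pnat); apply/gcdn_idPr.
Qed.

Lemma sum_moebius_gcdn_pnat (R : numFieldType) d v h :
  (0 < d)%N -> (0 < h)%N -> \pi(d).-nat v ->
  \sum_(a <- divisors d) (moebius a)%:~R * ((gcdn (a * v) h)%:R / a%:R) =
  if (h`_\pi(d) %| v)%N then (h`_\pi(d))%N%:R * \prod_(p <- primes d) (1 - p%:R^-1)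
  else 0 :> R.
Proof.
move=> d_gt0 h_gt0 v_pnat; have v_gt0 := pnat_gt0 v_pnat.
rewrite sum_moebius_gcdn //; have [h_v | hNv] := boolP (h`_\pi(d) %| v)%N.
  rewrite (gcdn_pnat_partn h_gt0 v_pnat h_v); congr (_ * _); apply: eq_big_seq => q q_d.
  by move: h_v; rewrite partn_dvdn_logn // => /allP/(_ q q_d); rewrite leqNgt => /negPf ->.
apply/eqP; rewrite mulf_eq0 prodf_seq_eq0; apply/orP; right.
move: hNv; rewrite partn_dvdn_logn // => /allPn[q q_d]; rewrite -ltnNge => lt_v_h.
by apply/hasP; exists q => //=; rewrite lt_v_h.
Qed.

Lemma dvdn_prod_pfactor (L : seq nat) (e : nat -> nat) n : uniq L -> all prime L ->
  (forall p, p \in L -> (p ^ e p %| n)%N) -> (\prod_(p <- L) p ^ e p %| n)%N.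
Proof.
elim: L => [|p L IH] /=; first by rewrite big_nil dvd1n.
move=> /andP[pNL L_uniq] /andP[p_pr L_pr] dvd_n; rewrite big_cons Gauss_dvd.
  by rewrite dvd_n ?mem_head // IH // => q q_L; rewrite dvd_n // inE q_L orbT.
rewrite coprimeXl // prime_coprime // Euclid_dvd_prod // big_has.
apply/hasPn => q q_L /=; have q_pr := allP L_pr q q_L.
rewrite Euclid_dvdX // dvdn_prime2 // negb_and; apply/orP; left.
by apply: contra pNL => /eqP ->.
Qed.

Lemma sqfree_part_dvdn (z : int) n : (0 < n)%N ->
  \pi(n).-nat `|sqfree_part z|%N -> (`|sqfree_part z| %| n)%N.
Proof.
move=> n_gt0; have [-> // | z_neq0] := eqVneq z 0.
rewrite /sqfree_part abszM absz_nat; have -> : `|sgz z|%N = 1%N by case: sgzP z_neq0.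
under eq_bigr do rewrite modn2.
rewrite mul1n => P_pnat; have /andP[P_gt0 _] := P_pnat.
apply: dvdn_prod_pfactor; rewrite ?primes_uniq ?all_prime_primes //.
move=> p p_z; have p_pr : prime p by move: p_z; rewrite mem_primes => /andP[].
case odd_e: (odd (logn p `|z|)); rewrite ?dvd1n // expn1.
have p_P : p \in \pi(\prod_(q <- primes `|z|) q ^ odd (logn q `|z|))%N.
  rewrite /= mem_primes p_pr P_gt0 Euclid_dvd_prod // big_has.
  by apply/hasP; exists p => //=; rewrite odd_e expn1.
by move: (pnatPpi P_pnat p_P); rewrite mem_primes => /and3P[].
Qed.

Lemma dvdz_sqfree_part_pnat (z : int) d v : (0 < d)%N -> \pi(d).-nat v ->
  (sqfree_part z %| (d * v)%:Z)%Z = \pi(d).-nat `|sqfree_part z|%N.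
Proof.
move=> d_gt0 v_pnat; have v_gt0 := pnat_gt0 v_pnat.
rewrite dvdzE absz_nat.
apply/idP/idP => [m_dv | /(sqfree_part_dvdn d_gt0) m_d]; last exact: dvdn_mulr.
have m_gt0 : (0 < `|sqfree_part z|)%N by apply: dvdn_gt0 m_dv; rewrite muln_gt0 d_gt0.
apply/pnatP => // p p_pr p_m.
have : (p %| d * v)%N by apply: dvdn_trans m_dv.
rewrite Euclid_dvdM // => /orP[p_d | p_v]; first by rewrite /= mem_primes p_pr d_gt0.
by apply: (pnatPpi v_pnat); rewrite /= mem_primes p_pr v_gt0.
Qed.

Definition deltaU_weight (R : realType) (D D0 : int) (d : nat) : R :=
  if excep D D0 (\pi(d).-nat `|D0|%N) then 2 else 1.

Lemma lhs_termE (R : realType) (D z : int) h d v : (0 < h)%N -> (0 < d)%N ->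
  lhs_term R D (sqfree_part z) h d v =
  if \pi(d).-nat v && (dinf_gcd d h %| v)%N then
    deltaU_weight R D (sqfree_part z) d * (dinf_gcd d h)%:R / d%:R / v%:R ^+ 2
  else 0.
Proof.
move=> h_gt0 d_gt0; rewrite /lhs_term; case: ifP => //= v_pnat.
have v_gt0 := pnat_gt0 v_pnat.
have dR : (d%:R : R) != 0 by rewrite pnatr_eq0 -lt0n.
have vR : (v%:R : R) != 0 by rewrite pnatr_eq0 -lt0n.
set c := deltaU_weight R D (sqfree_part z) d.
set P := \prod_(p <- primes d) (1 - (p%:R : R)^-1).
have totient_dv : (totient (d * v))%:R = d%:R * v%:R * P :> R.
  by rewrite natr_totient ?muln_gt0 ?d_gt0 // primes_mul_pnat // natrM.
have P_neq0 : P != 0.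
  have : (totient d)%:R != 0 :> R by rewrite pnatr_eq0 -lt0n totient_gt0.
  by rewrite natr_totient // mulf_eq0 negb_or => /andP[].
transitivity (c / (d%:R * v%:R * P * v%:R) *
  \sum_(a <- divisors d) (moebius a)%:~R * ((gcdn (a * v) h)%:R / a%:R)).
  rewrite big_distrr /=; apply: eq_big_seq => a; rewrite -dvdn_divisors // => a_d.
  have aR : (a%:R : R) != 0 by rewrite pnatr_eq0 -lt0n (dvdn_gt0 d_gt0 a_d).
  rewrite /deltaU_nm dvdz_sqfree_part_pnat // -/(deltaU_weight R D _ d) -/c.
  rewrite totient_dv natrM.
  move: ((moebius a)%:~R : R) ((gcdn (a * v) h)%:R : R) => M G.
  by field; rewrite aR vR P_neq0 dR.
rewrite sum_moebius_gcdn_pnat // -/P /dinf_gcd; case: ifP => _; last by rewrite mulr0.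
by field; rewrite P_neq0 dR vR.
Qed.

Lemma pnat_prime_ndvd pi q j : prime q -> q \notin pi -> pi.-nat j -> ~~ (q %| j)%N.
Proof.
move=> q_pr qNpi j_pnat; apply: contra qNpi => q_j; apply: (pnatPpi j_pnat).
by rewrite mem_primes q_pr q_j (pnat_gt0 j_pnat).
Qed.

Lemma set_bij_pfactorM (L : seq nat) q : prime q -> q \notin L ->
  set_bij (setT `*`` (fun=> [set j | [pred p in L].-nat j]))
          [set u | [pred p in q :: L].-nat u] (fun ij => (q ^ ij.1 * ij.2)%N).
Proof.
move=> q_pr qNL; have q_gt0 := prime_gt0 q_pr.
have qNpi : q \notin [pred p in L] by [].
split.
- move=> [i j] [_ /= j_pnat]; rewrite /= pnatM pnatX pnatE // inE eqxx /=.
  by apply: sub_in_pnat j_pnat => p _; rewrite !inE => ->; rewrite orbT.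
- move=> [i j] [i' j'] /set_mem[_ /= j_pnat] /set_mem[_ /= j'_pnat] /= Eqij.
  have qNj := pnat_prime_ndvd q_pr qNpi j_pnat.
  have qNj' := pnat_prime_ndvd q_pr qNpi j'_pnat.
  have Eii' : i = i'.
    move: (congr1 (logn q) Eqij).
    rewrite !lognM ?expn_gt0 ?q_gt0 ?(pnat_gt0 j_pnat) ?(pnat_gt0 j'_pnat) //.
    by rewrite !pfactorK // !logn_coprime ?prime_coprime // !addn0.
  move: Eqij; rewrite -{}Eii' => /eqP; rewrite eqn_pmul2l ?expn_gt0 ?q_gt0 //.
  by move=> /eqP ->.
- move=> u u_pnat; have u_gt0 := pnat_gt0 u_pnat.
  have [j qNj Eu] := pfactor_coprime q_pr u_gt0; rewrite prime_coprime // in qNj.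
  exists (logn q u, j); last by rewrite /= mulnC.
  split => //=; apply/pnatP; first by move: u_gt0; rewrite Eu muln_gt0 => /andP[].
  move=> p p_pr p_j; have p_u : (p %| u)%N by rewrite Eu dvdn_mulr.
  have : p \in q :: L by apply: (pnatPpi u_pnat); rewrite mem_primes p_pr u_gt0.
  by rewrite inE => /orP[/eqP Epq | //]; move: qNj; rewrite -Epq p_j.
Qed.

Section ExtendedRealSeries.
Local Open Scope ereal_scope.

Lemma nneseries_EFin (R : realType) (u : nat -> R) (l : R) :
  series u @ \oo --> l -> \sum_(i <oo) (u i)%:E = l%:E.
Proof.
move=> u_l; have -> : (fun n => \sum_(0 <= i < n) (u i)%:E) = EFin \o series u.
  by apply/funext => n; rewrite /= sumEFin.
by rewrite EFin_lim ?(cvg_lim _ u_l) //; apply: cvgP u_l.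
Qed.

Lemma cvg_series_nneseries (R : realType) (u : nat -> R) (l : R) :
  (forall n, 0 <= u n)%R -> \sum_(i <oo) (u i)%:E = l%:E -> series u @ \oo --> l.
Proof.
move=> u_ge0 u_l.
have cvg_u : cvgn (fun n => \sum_(0 <= i < n) (u i)%:E).
  by apply: is_cvg_nneseries => n _; rewrite lee_fin.
have -> : series u = fine \o (fun n => \sum_(0 <= i < n) (u i)%:E).
  by apply/funext => n; rewrite /= sumEFin.
by apply: fine_cvg; rewrite -u_l.
Qed.

Lemma nneseries_geometric (R : realType) (x : R) : (0 <= x < 1)%R ->
  \sum_(i <oo) (x ^+ i)%:E = ((1 - x)^-1)%:E.
Proof.
move=> /andP[x_ge0 x_lt1]; apply: nneseries_EFin.
have := @cvg_geometric_series R 1 x; rewrite ger0_norm // div1r => /(_ x_lt1).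
by rewrite -exprn_geometric.
Qed.

End ExtendedRealSeries.

Section EulerProduct.
Local Open Scope ereal_scope.
Variables (R : realType) (k : nat).
Hypothesis k_gt0 : (0 < k)%N.

Let f (u : nat) : \bar R := (((u%:R : R) ^+ k)^-1)%:E.

Let f_ge0 u : 0 <= f u.
Proof. by rewrite lee_fin invr_ge0 exprn_ge0. Qed.

Lemma inv_expr_prime_lt1 p : prime p -> (((p%:R : R) ^+ k)^-1 < 1)%R.
Proof.
move=> p_pr; rewrite invf_lt1 ?exprn_gt0 ?ltr0n ?prime_gt0 //.
by rewrite expr_gt1 // ltr1n prime_gt1.
Qed.

Lemma euler_product_pnat (L : seq nat) : uniq L -> all prime L ->
  \sum_(u <oo | [pred p in L].-nat u) f u =
  (\prod_(p <- L) (1 - ((p%:R : R) ^+ k)^-1)^-1)%:E.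
Proof.
elim: L => [|q L IH] /=.
  move=> _ _; rewrite big_nil nneseries_esum //.
  have -> : [set u | [pred p in [::]].-nat u] = [set 1%N].
    apply/seteqP; split => [u /= u_pnat | u /= ->] //.
    have u_gt0 := pnat_gt0 u_pnat.
    case: (ltnP 1 u) => [u_gt1|]; last by rewrite /set1 /=; lia.
    have : pdiv u \in \pi(u) by rewrite /= mem_primes pdiv_prime // u_gt0 pdiv_dvd.
    by move/(pnatPpi u_pnat).
  by rewrite esum_set1 // /f expr1n invr1.
move=> /andP[qNL L_uniq] /andP[q_pr L_pr].
set x : R := (((q%:R : R) ^+ k)^-1)%R.
have x_ge0 : (0 <= x)%R by rewrite invr_ge0 exprn_ge0.
have fM i j : f (q ^ i * j)%N = (x ^+ i)%:E * f j.
  by rewrite /f -EFinM natrM natrX exprMn invfM -exprM mulnC exprM exprVn.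
rewrite nneseries_esum // (reindex_esum _ _ _ _ (set_bij_pfactorM q_pr qNL)).
rewrite -(esum_esum (fun i j _ _ => f_ge0 (q ^ i * j)%N)) /=.
under eq_esum => i _.
  rewrite -nneseries_esum; last by move=> j _.
  under eq_eseriesr do rewrite fM.
  rewrite nneseriesZl // IH // -EFinM.
  over.
rewrite -nneseries_esumT; last first.
  move=> i; rewrite lee_fin mulr_ge0 ?exprn_ge0 // big_seq prodr_ge0 // => p p_L.
  by rewrite invr_ge0 subr_ge0 ltW // inv_expr_prime_lt1 // (allP L_pr).
under eq_eseriesr do rewrite mulrC EFinM.
rewrite nneseriesZl; last by move=> i _; rewrite lee_fin exprn_ge0.
by rewrite nneseries_geometric ?x_ge0 ?inv_expr_prime_lt1 // -EFinM big_cons mulrC.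
Qed.

End EulerProduct.

Lemma nneseries_pnat_dvdn (R : realType) (d g k : nat) (K : R) :
  (0 < k)%N -> \pi(d).-nat g -> (0 <= K)%R ->
  (\sum_(v <oo | \pi(d).-nat v && (g %| v)%N) (K / v%:R ^+ k)%:E =
  (K / g%:R ^+ k * \prod_(p <- primes d) (1 - (p%:R ^+ k)^-1)^-1)%:E)%E.
Proof.
move=> k_gt0 g_pnat K_ge0; have g_gt0 := pnat_gt0 g_pnat.
rewrite nneseries_esum; last by move=> v _; rewrite lee_fin divr_ge0 ?exprn_ge0.
rewrite (reindex_esum [set u | \pi(d).-nat u] _ (fun u => (g * u)%N)); last first.
  split.
  - by move=> u /= u_pnat; rewrite pnatM g_pnat u_pnat dvdn_mulr.
  - by move=> u u' _ _ /eqP; rewrite eqn_pmul2l // => /eqP.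
  - move=> v /andP[v_pnat g_v]; exists (v %/ g)%N; last by rewrite /= mulnC divnK.
    exact: pnat_div g_v v_pnat.
under eq_esum => u _ do rewrite natrM exprMn invfM mulrA EFinM.
rewrite -nneseries_esum; last first.
  by move=> u _; rewrite mule_ge0 // lee_fin ?divr_ge0 ?invr_ge0 ?exprn_ge0.
rewrite nneseriesZl; last by move=> u _; rewrite lee_fin invr_ge0 exprn_ge0.
by rewrite (euler_product_pnat R k_gt0 (primes_uniq d) (all_prime_primes d)) -EFinM.
Qed.

Lemma deltaUE (R : realType) (D z : int) h d : (0 < d)%N ->
  deltaU R D (sqfree_part z) h d =
  deltaU_weight R D (sqfree_part z) d / (dinf_gcd d h)%:R / d%:R *
  \prod_(p <- primes d) (1 - (p%:R ^+ 2)^-1)^-1.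
Proof.
move=> d_gt0; have gR : ((dinf_gcd d h)%:R : R) != 0 by rewrite pnatr_eq0 -lt0n part_gt0.
have dR : (d%:R : R) != 0 by rewrite pnatr_eq0 -lt0n.
rewrite /deltaU /etaU /deltaU_weight; case: ifP => [exc | _]; last first.
  by rewrite addr0; field; rewrite gR dR.
have D0_d : (`|sqfree_part z| %| d)%N.
  by apply: sqfree_part_dvdn d_gt0 _; move: exc; rewrite /excep => /norP[_ /negbNE].
by rewrite (gcdn_idPr D0_d) divnn (dvdn_gt0 d_gt0 D0_d) lcmn1; field; rewrite gR dR.
Qed.

Unset Implicit Arguments.

Theorem lemma6p4 (R : realType) (a1 a2 : int) (alpha beta : algC) (h d : nat) :
  a1 != 0 -> a2 != 0 ->
  'X^2 - (a1%:~R : algC)%:P * 'X - (a2%:~R : algC)%:P = ('X - alpha%:P) * ('X - beta%:P) ->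
  (forall n : nat, (0 < n)%N -> (alpha / beta) ^+ n != 1) ->
  ~ (exists k : int, a1 ^+ 2 + 4 * a2 = k ^+ 2) ->
  is_max_pow (a1 ^+ 2 + 4 * a2) (alpha / beta) h ->
  (0 < d)%N -> odd d ->
  (sqfree_part (a1 ^+ 2 + 4 * a2) = -3 -> ~~ (3 %| d)%N) ->
  (fun N : nat => \sum_(0 <= v < N)
       lhs_term R (a1 ^+ 2 + 4 * a2) (sqfree_part (a1 ^+ 2 + 4 * a2)) h d v)
    @ \oo --> deltaU R (a1 ^+ 2 + 4 * a2) (sqfree_part (a1 ^+ 2 + 4 * a2)) h d.
Proof.
move=> _ _ _ _ _ [h_gt0 _] d_gt0 _ _; set D := a1 ^+ 2 + 4 * a2.
set g := dinf_gcd d h; set c := deltaU_weight R D (sqfree_part D) d.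
have g_pnat : \pi(d).-nat g := part_pnat _ _.
have coef_ge0 : 0 <= c * g%:R / d%:R by rewrite /c /deltaU_weight; case: ifP.
apply: cvg_series_nneseries => [v | ].
  by rewrite lhs_termE //; case: ifP => // _; rewrite divr_ge0 ?exprn_ge0.
under eq_eseriesr do rewrite lhs_termE // fun_if.
rewrite -eseries_mkcond nneseries_pnat_dvdn // deltaUE //.
have gR : (g%:R : R) != 0 by rewrite pnatr_eq0 -lt0n part_gt0.
have dR : (d%:R : R) != 0 by rewrite pnatr_eq0 -lt0n.
by congr (_%:E); field; rewrite dR gR.
Qed.
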